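(* Let $\alpha\ge 0$, let $\mathbf{G}\subset\mathbb{R}^2$ be a ground-truth box (a closed oriented rectangle of positive area not containing the origin) and let $\mathbf{P}\subset\mathbb{R}^2$ be a prediction box (a closed oriented rectangle of positive area). Then $\mathsf{EC\text{-}IoU}(\mathbf{P},\mathbf{G}) = 1$ if and only if $\mathbf{P} = \mathbf{G}$.
   Context: $\rho(x,y)=\sqrt{x^2+y^2}$ is the distance to the origin (the ego position). For a ground-truth box $\mathbf{G}$ with center $(x_{\mathbf{G}},y_{\mathbf{G}})$, define the weight $\omega_{\mathbf{G}}(x,y) = \left[\rho(x_{\mathbf{G}},y_{\mathbf{G}})/\rho(x,y)\right]^{\alpha}$ for $(x,y)\in\mathbf{G}$. For a region $\mathbf{D}\subseteq\mathbf{G}$ let $\mathsf{Weighted\text{-}Area}_{\mathbf{G}}(\mathbf{D}) = \iint_{\mathbf{D}} \omega_{\mathbf{G}}(x,y)\,dA$, and for any region $\mathbf{D}$ let $\mathsf{Area}(\mathbf{D}) = \iint_{\mathbf{D}} 1\,dA$. The Ego-Centric IoU is $$\mathsf{EC\text{-}IoU}(\mathbf{P},\mathbf{G}) = \frac{\mathsf{Weighted\text{-}Area}_{\mathbf{G}}(\mathbf{P}\cap\mathbf{G})}{\mathsf{Weighted\text{-}Area}_{\mathbf{G}}(\mathbf{G}) + \mathsf{Area}(\mathbf{P}) - \mathsf{Area}(\mathbf{P}\cap\mathbf{G})}.$$ *)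

From HB Require Import structures.
From mathcomp Require Import all_boot all_order all_algebra.
From mathcomp Require Import all_classical all_reals all_analysis.
Set Implicit Arguments. Unset Strict Implicit. Unset Printing Implicit Defensive.
Import Order.TTheory GRing.Theory Num.Theory.
Local Open Scope classical_set_scope.
Local Open Scope ring_scope.

Section Defs.
Variable R : realType.

Definition leb2 := ((@lebesgue_measure R) \x (@lebesgue_measure R))%E.

(* distance to the origin (ego position) *)
Definition rho (p : R * R) : R := Num.sqrt (p.1 ^+ 2 + p.2 ^+ 2).

Definition obox (c : R * R) (a b th : R) : set (R * R) :=
  [set p | exists u v : R, `|u| <= a /\ `|v| <= b /\
     p = (c.1 + u * cos th - v * sin th, c.2 + u * sin th + v * cos th)].

Definition ec_weight (alpha : R) (cG : R * R) (p : R * R) : R :=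
  (rho cG / rho p) `^ alpha.

Definition Area (D : set (R * R)) : \bar R := leb2 D.

Definition Weighted_Area (alpha : R) (cG : R * R) (D : set (R * R)) : \bar R :=
  (\int[leb2]_(p in D) (ec_weight alpha cG p)%:E)%E.

(* EC-IoU(P, G), where G is the ground truth box with center cG *)
Definition EC_IoU (alpha : R) (P G : set (R * R)) (cG : R * R) : R :=
  fine (Weighted_Area alpha cG (P `&` G)) /
  fine (Weighted_Area alpha cG G + Area P - Area (P `&` G))%E.

End Defs.

(* EC-IoU(P, G) = A / (A + B + Y) with A = W(P & G), B = W(G \ P) and Y = |P \ G|, W the
   weighted area, so it equals 1 exactly when A <> 0 and B = Y = 0.  Since G is compact and
   avoids the origin, the weight is pinched between positive constants on G, hence W(D) = 0
   iff |D| = 0 for D included in G.  It remains that boxes with nonempty interior whose two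
   differences are null coincide: if x lies in one box but not in the other, the other box
   misses a square around x, while the first box contains a small square near x. *)

From HB Require Import structures.
From mathcomp Require Import all_boot all_order all_algebra.
From mathcomp Require Import all_classical all_reals all_analysis.
From mathcomp Require Import ring lra measurable_realfun.
Import Order.TTheory GRing.Theory Num.Theory.
Local Open Scope classical_set_scope.
Local Open Scope ring_scope.

Lemma div_add3_eq1 (F : numFieldType) (x y z : F) : 0 <= y -> 0 <= z ->
  (x / (x + y + z) == 1) = [&& x != 0, y == 0 & z == 0].
Proof.
move=> y0 z0; apply/idP/and3P => [/eqP h | [x0 /eqP -> /eqP ->]]; last first.
  by rewrite !addr0 divff.
have d0 : x + y + z != 0.
  by apply: contra_eq_neq h => ->; rewrite invr0 mulr0 eq_sym oner_neq0.
have hx : x = x + y + z by rewrite -[LHS](divfK d0) h mul1r.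
have /eqP : y + z = 0 by apply: (addrI x); rewrite addrA -hx addr0.
rewrite paddr_eq0 // => /andP[/eqP y0' /eqP z0'].
by move: d0; rewrite y0' z0' !addr0 eqxx => ->.
Qed.

Section OrientedBox.
Context {R : realType}.
Implicit Types (c p x y z : R * R) (a b e th : R).

(* Coordinates of [p] in the frame of the box, i.e. [p - c] rotated by [- th]. *)
Definition obox_u c th p : R := cos th * (p.1 - c.1) + sin th * (p.2 - c.2).
Definition obox_v c th p : R := - sin th * (p.1 - c.1) + cos th * (p.2 - c.2).

Definition square y e : set (R * R) := `[y.1 - e, y.1 + e] `*` `[y.2 - e, y.2 + e].

Definition dist1 x y : R := `|x.1 - y.1| + `|x.2 - y.2|.

Lemma squareP y e z : square y e z <-> `|z.1 - y.1| <= e /\ `|z.2 - y.2| <= e.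
Proof.
by rewrite /square /= !in_itv /= -!ler_distlC (distrC y.1) (distrC y.2).
Qed.

Lemma oboxE c a b th p :
  obox c a b th p <-> `|obox_u c th p| <= a /\ `|obox_v c th p| <= b.
Proof.
have cs := cos2Dsin2 th.
split=> [[u [v [hu [hv ->]]]] | [hu hv]].
  rewrite /obox_u /obox_v /=.
  have -> : cos th * (c.1 + u * cos th - v * sin th - c.1) +
      sin th * (c.2 + u * sin th + v * cos th - c.2) = u * (cos th ^+ 2 + sin th ^+ 2).
    by ring.
  have -> : - sin th * (c.1 + u * cos th - v * sin th - c.1) +
      cos th * (c.2 + u * sin th + v * cos th - c.2) = v * (cos th ^+ 2 + sin th ^+ 2).
    by ring.
  by rewrite cs !mulr1.
exists (obox_u c th p), (obox_v c th p); do 2 split => //.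
rewrite /obox_u /obox_v; case: p {hu hv} => p1 p2 /=; congr (_, _).
  transitivity (c.1 + (p1 - c.1) * (cos th ^+ 2 + sin th ^+ 2)); last by ring.
  by rewrite cs mulr1 addrC subrK.
transitivity (c.2 + (p2 - c.2) * (cos th ^+ 2 + sin th ^+ 2)); last by ring.
by rewrite cs mulr1 addrC subrK.
Qed.

Lemma obox_center c a b th : 0 <= a -> 0 <= b -> obox c a b th c.
Proof. by move=> a0 b0; apply/oboxE; rewrite /obox_u /obox_v !subrr !mulr0 addr0 normr0. Qed.

Lemma norm_lincomb_le (k l s t : R) : `|k| <= 1 -> `|l| <= 1 ->
  `|k * s + l * t| <= `|s| + `|t|.
Proof.
move=> hk hl; rewrite (le_trans (ler_normD _ _)) // lerD // normrM ler_piMl //.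
Qed.

Lemma norm_cos_le1 th : `|cos th| <= 1.
Proof. by rewrite ler_norml cos_geN1 cos_le1. Qed.

Lemma norm_sin_le1 th : `|sin th| <= 1.
Proof. by rewrite ler_norml sin_geN1 sin_le1. Qed.

Lemma dist1_square {y e z} : square y e z -> dist1 z y <= 2 * e.
Proof. by move=> /squareP[? ?]; rewrite /dist1; lra. Qed.

Lemma dist_obox_u c th z x : `|obox_u c th z - obox_u c th x| <= dist1 z x.
Proof.
rewrite (_ : _ - _ = cos th * (z.1 - x.1) + sin th * (z.2 - x.2)); last by rewrite /obox_u; ring.
by rewrite norm_lincomb_le ?norm_cos_le1 ?norm_sin_le1.
Qed.

Lemma dist_obox_v c th z x : `|obox_v c th z - obox_v c th x| <= dist1 z x.
Proof.
rewrite (_ : _ - _ = - sin th * (z.1 - x.1) + cos th * (z.2 - x.2)); last by rewrite /obox_v; ring.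
by rewrite norm_lincomb_le ?normrN ?norm_cos_le1 ?norm_sin_le1.
Qed.

Lemma dist1C x y : dist1 x y = dist1 y x.
Proof. by rewrite /dist1 distrC (distrC x.2). Qed.

Lemma norm_obox_u_le c th z x : `|obox_u c th z| <= `|obox_u c th x| + dist1 z x.
Proof.
have := ler_normD (obox_u c th x) (obox_u c th z - obox_u c th x).
by rewrite addrC subrK => /le_trans; apply; rewrite lerD2l dist_obox_u.
Qed.

Lemma norm_obox_v_le c th z x : `|obox_v c th z| <= `|obox_v c th x| + dist1 z x.
Proof.
have := ler_normD (obox_v c th x) (obox_v c th z - obox_v c th x).
by rewrite addrC subrK => /le_trans; apply; rewrite lerD2l dist_obox_v.
Qed.

Lemma obox_sub_square c a b th : obox c a b th `<=` square c (a + b).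
Proof.
move=> _ [u [v [hu [hv ->]]]]; apply/squareP => /=.
have -> : c.1 + u * cos th - v * sin th - c.1 = cos th * u + (- sin th) * v by ring.
have -> : c.2 + u * sin th + v * cos th - c.2 = sin th * u + cos th * v by ring.
by split; apply: le_trans (lerD hu hv);
  rewrite norm_lincomb_le ?normrN ?norm_cos_le1 ?norm_sin_le1.
Qed.

Lemma obox_gap {c a b th x} : ~ obox c a b th x ->
  exists2 d, 0 < d & forall p, obox c a b th p -> d <= dist1 p x.
Proof.
move=> /oboxE /not_andP hx.
have [ux | vx] : a < `|obox_u c th x| \/ b < `|obox_v c th x|.
- by case: hx => /negP; rewrite -ltNge; [left | right].
- exists (`|obox_u c th x| - a); first by rewrite subr_gt0.
  by move=> p /oboxE[hp _]; have := norm_obox_u_le c th x p; rewrite dist1C; lra.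
- exists (`|obox_v c th x| - b); first by rewrite subr_gt0.
  by move=> p /oboxE[_ hp]; have := norm_obox_v_le c th x p; rewrite dist1C; lra.
Qed.

Lemma square_sub_not_obox {c a b th x} : ~ obox c a b th x ->
  exists2 r, 0 < r & square x r `<=` ~` obox c a b th.
Proof.
move=> /obox_gap[d d0 gap]; exists (d / 4); first by rewrite divr_gt0.
by move=> z /dist1_square zx /gap; lra.
Qed.

Lemma scale_down_exists (k eps : R) : 0 < k -> 0 < eps ->
  exists t, [/\ 0 < t, t <= 1 & t * k <= eps].
Proof.
move=> k0 eps0; exists (Num.min 1 (eps / k)); split; rewrite ?ge_min ?lexx //.
  by rewrite lt_min ltr01 divr_gt0.
apply: le_trans (ler_wpM2r (ltW k0) (_ : _ <= eps / k)) _; first by rewrite ge_min lexx orbT.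
by rewrite divfK ?gt_eqF.
Qed.

Lemma square_sub_obox_near {c a b th x eps} : 0 < a -> 0 < b -> 0 < eps ->
  obox c a b th x ->
  exists y e, 0 < e /\ square y e `<=` obox c a b th `&` square x eps.
Proof.
move=> a0 b0 eps0 xG; have /squareP[xc1 xc2] := obox_sub_square c a b th x xG.
move/oboxE: xG => [ux vx].
have [t [t0 t1 ta]] : exists t, [/\ 0 < t, t <= 1 & t * (a + b) <= eps / 2].
  by apply: scale_down_exists; lra.
set m := Num.min a b.
have [m0 ma mb] : [/\ 0 < m, m <= a & m <= b] by rewrite lt_min !ge_min !lexx orbT a0.
(* Moving x towards the centre scales its box coordinates by 1 - t, freeing room for a square. *)
set y : R * R := (x.1 + t * (c.1 - x.1), x.2 + t * (c.2 - x.2)).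
have uy : obox_u c th y = (1 - t) * obox_u c th x by rewrite /obox_u /=; ring.
have vy : obox_v c th y = (1 - t) * obox_v c th x by rewrite /obox_v /=; ring.
exists y, (t * m / 2); split => [|z zy]; first by rewrite !mulr_gt0.
have := dist1_square zy; have /squareP[zy1 zy2] := zy.
have tma : t * m <= t * a by rewrite ler_pM2l.
have tmb : t * m <= t * b by rewrite ler_pM2l.
rewrite /dist1 => zy12; split.
- apply/oboxE; split.
  + have := norm_obox_u_le c th z y; rewrite uy normrM ger0_norm ?subr_ge0 //.
    have : (1 - t) * `|obox_u c th x| <= (1 - t) * a by apply: ler_wpM2l; rewrite ?subr_ge0.
    rewrite /dist1; lra.
  + have := norm_obox_v_le c th z y; rewrite vy normrM ger0_norm ?subr_ge0 //.
    have : (1 - t) * `|obox_v c th x| <= (1 - t) * b by apply: ler_wpM2l; rewrite ?subr_ge0.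
    rewrite /dist1; lra.
- apply/squareP.
  have yx1 : `|y.1 - x.1| <= t * (a + b).
    by rewrite /= addrC addKr normrM (gtr0_norm t0) distrC ler_pM2l.
  have yx2 : `|y.2 - x.2| <= t * (a + b).
    by rewrite /= addrC addKr normrM (gtr0_norm t0) distrC ler_pM2l.
  have := ler_distD y.1 z.1 x.1; have := ler_distD y.2 z.2 x.2.
  have : 0 <= t * b by rewrite mulr_ge0 ?ltW.
  split; lra.
Qed.

End OrientedBox.

Section BoxMeasure.
Context {R : realType}.
Implicit Types (c x y : R * R) (a b e th : R) (D E : set (R * R)).

Lemma measurable_affine2 (k l d1 d2 : R) :
  measurable_fun [set: R * R] (fun p : R * R => k * (p.1 - d1) + l * (p.2 - d2)).
Proof.
by apply: measurable_funD; apply: measurable_funM => //; apply: measurable_funB.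
Qed.

Lemma measurable_obox c a b th : measurable (obox c a b th).
Proof.
have -> : obox c a b th = (obox_u c th @^-1` `[- a, a]) `&` (obox_v c th @^-1` `[- b, b]).
  by apply/seteqP; split=> p /=; rewrite !in_itv /= -!ler_norml => /oboxE.
by apply: measurableI; rewrite -[X in measurable X]setTI; exact: measurable_affine2.
Qed.

Lemma measurable_square y e : measurable (square y e).
Proof. exact: measurableX. Qed.

Lemma leb2_square y e : 0 < e -> leb2 (square y e) = ((2 * e) ^+ 2)%:E.
Proof.
move=> e0; have itv r : lebesgue_measure `[r - e, r + e]%classic = (2 * e)%:E.
  rewrite lebesgue_measure_itv /= lte_fin ifT; last lra.
  by rewrite -EFinB; congr EFin; ring.
by rewrite /leb2 product_measure1E // expr2 EFinM; congr (_ * _)%E; exact: itv.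
Qed.

Lemma leb2_obox_lty {c a b th} : 0 < a -> 0 < b -> (leb2 (obox c a b th) < +oo)%E.
Proof.
move=> a0 b0; apply: (@le_lt_trans _ _ (leb2 (square c (a + b)))).
  apply: le_measure; rewrite ?inE;
    by [exact: measurable_obox | exact: measurable_square | exact: obox_sub_square].
by rewrite leb2_square ?ltry ?addr_gt0.
Qed.

Lemma leb2_sub_fin_num {D E} : measurable D -> measurable E -> D `<=` E ->
  (leb2 E < +oo)%E -> leb2 D \is a fin_num.
Proof.
move=> mD mE DE E_lty; rewrite ge0_fin_numE ?measure_ge0 //.
by apply: le_lt_trans E_lty; apply: le_measure; rewrite ?inE.
Qed.

Lemma leb2_square_gt0 D y e : measurable D -> 0 < e -> square y e `<=` D -> (0 < leb2 D)%E.
Proof.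
move=> mD e0 sub; apply: (@lt_le_trans _ _ (leb2 (square y e))).
  by rewrite leb2_square // lte_fin exprn_gt0 ?mulr_gt0.
by apply: le_measure; rewrite ?inE //; exact: measurable_square.
Qed.

Lemma leb2_obox_gt0 c a b th : 0 < a -> 0 < b -> (0 < leb2 (obox c a b th))%E.
Proof.
move=> a0 b0; have := obox_center c a b th (ltW a0) (ltW b0).
move=> /(square_sub_obox_near a0 b0 ltr01)[y [e [e0 sub]]].
apply: leb2_square_gt0 e0 _; first exact: measurable_obox.
by apply: subset_trans sub _; apply: subIsetl.
Qed.

Lemma obox_sub_of_null_setD c a b th c' a' b' th' : 0 < a -> 0 < b ->
  leb2 (obox c a b th `\` obox c' a' b' th') = 0 -> obox c a b th `<=` obox c' a' b' th'.
Proof.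
move=> a0 b0 null x xQ; apply: contrapT => /square_sub_not_obox[r r0 rS].
have [y [e [e0 sub]]] := square_sub_obox_near a0 b0 r0 xQ.
suff : (0 < leb2 (obox c a b th `\` obox c' a' b' th'))%E by rewrite null ltxx.
apply: leb2_square_gt0 e0 _; first by apply: measurableD; exact: measurable_obox.
by move=> z /sub[zQ /rS].
Qed.

End BoxMeasure.

Section EgoWeight.
Context {R : realType}.
Implicit Types (c p : R * R) (a b th : R).

Lemma norm_fst_le_rho p : `|p.1| <= rho p.
Proof. by rewrite /rho -sqrtr_sqr ler_sqrt ?addr_ge0 ?sqr_ge0 // lerDl sqr_ge0. Qed.

Lemma norm_snd_le_rho p : `|p.2| <= rho p.
Proof. by rewrite /rho -sqrtr_sqr ler_sqrt ?addr_ge0 ?sqr_ge0 // lerDr sqr_ge0. Qed.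

Lemma rho_le_norm_sum p : rho p <= `|p.1| + `|p.2|.
Proof.
rewrite /rho -[X in _ <= X]ger0_norm ?addr_ge0 // -sqrtr_sqr ler_sqrt ?sqr_ge0 //.
have := mulr_ge0 (normr_ge0 p.1) (normr_ge0 p.2).
by rewrite sqrrD !real_normK ?num_real //; lra.
Qed.

Lemma obox_rho_bounds c a b th : ~ obox c a b th (0, 0) ->
  exists d K, 0 < d /\ forall p, obox c a b th p -> d <= rho p <= K.
Proof.
move=> /obox_gap[d d0 gap].
exists (d / 2), (`|c.1| + `|c.2| + 2 * (a + b)); split=> [|p pG]; first by rewrite divr_gt0.
have /squareP[pc1 pc2] := obox_sub_square c a b th p pG.
have := gap p pG; rewrite /dist1 !subr0 => dp.
have := norm_fst_le_rho p; have := norm_snd_le_rho p; have := rho_le_norm_sum p.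
have := ler_distD c.1 p.1 0; have := ler_distD c.2 p.2 0; rewrite !subr0; lra.
Qed.

Lemma measurable_rho : measurable_fun [set: R * R] (@rho R).
Proof.
rewrite (_ : @rho R = Num.sqrt \o (fun p => p.1 ^+ 2 + p.2 ^+ 2)) //.
apply: measurableT_comp; first exact: continuous_measurable_fun (@sqrt_continuous R).
by apply: measurable_funD; apply: measurable_funX; [exact: measurable_fst | exact: measurable_snd].
Qed.

Lemma measurable_ec_weight alpha c : measurable_fun [set: R * R] (ec_weight alpha c).
Proof.
have -> : ec_weight alpha c = (@powR R)^~ alpha \o (fun p => rho c * rho p `^ (-1)).
  by apply/funext => p; rewrite /ec_weight /= powR_inv1 // sqrtr_ge0.
apply: measurableT_comp => //; apply: measurable_funM => //.
exact: (measurableT_comp (measurable_powR (-1)) measurable_rho).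
Qed.

Lemma ec_weight_obox_bounds {alpha c a b th} : 0 <= alpha -> 0 <= a -> 0 <= b ->
  ~ obox c a b th (0, 0) ->
  exists2 m, 0 < m & exists M, forall p, obox c a b th p -> m <= ec_weight alpha c p <= M.
Proof.
move=> alpha0 a0 b0 /obox_rho_bounds[d [K [d0 rhoG]]].
have /andP[dc cK] := rhoG c (obox_center c a b th a0 b0).
have K0 : 0 < K by lra.
exists ((rho c / K) `^ alpha); first by rewrite powR_gt0 // divr_gt0 //; lra.
exists ((rho c / d) `^ alpha) => p /rhoG /andP[dp pK].
have [p0 c0] : 0 < rho p /\ 0 < rho c by split; lra.
rewrite /ec_weight; apply/andP; split; apply: ge0_ler_powR => //;
  rewrite ?nnegrE ?divr_ge0 ?(ltW c0) ?(ltW p0) ?(ltW K0) ?(ltW d0) // ler_pM2l // lef_pV2 ?posrE //.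
Qed.

Section WeightedArea.
Context {alpha : R} {c : R * R}.

Lemma Weighted_Area_ge0 D : (0 <= Weighted_Area alpha c D)%E.
Proof. by apply: integral_ge0 => p _; rewrite lee_fin powR_ge0. Qed.

Lemma Weighted_Area_splitI A B : measurable A -> measurable B ->
  Weighted_Area alpha c A = (Weighted_Area alpha c (A `&` B) + Weighted_Area alpha c (A `\` B))%E.
Proof.
move=> mA mB; rewrite /Weighted_Area -ge0_integral_setU ?setUIDK //.
- exact: measurableI.
- exact: measurableD.
- by apply/measurable_EFinP; exact: measurable_funTS (measurable_ec_weight _ _).
- by move=> p _; rewrite lee_fin powR_ge0.
- by apply/disj_setPS => x [[_ Bx] [_ nBx]].
Qed.

Context {G : set (R * R)} {m M : R}.
Hypotheses (mG : measurable G) (G_lty : (leb2 G < +oo)%E) (m_gt0 : 0 < m)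
  (weight_bounds : forall p, G p -> m <= ec_weight alpha c p <= M).

Lemma Weighted_Area_lbound D : measurable D -> D `<=` G ->
  (m%:E * leb2 D <= Weighted_Area alpha c D)%E.
Proof.
move=> mD DG; rewrite -integral_cst //; apply: ge0_le_integral => //.
- by move=> p _; rewrite lee_fin ltW.
- by apply/measurable_EFinP; exact: measurable_funTS (measurable_ec_weight _ _).
- by move=> p /DG /weight_bounds /andP[? _]; rewrite lee_fin.
Qed.

Lemma Weighted_Area_ubound D : measurable D -> D `<=` G ->
  (Weighted_Area alpha c D <= M%:E * leb2 D)%E.
Proof.
move=> mD DG; rewrite -integral_cst //; apply: ge0_le_integral => //.
- by move=> p _; rewrite lee_fin powR_ge0.
- by apply/measurable_EFinP; exact: measurable_funTS (measurable_ec_weight _ _).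
- by move=> p /DG /weight_bounds /andP[_ ?]; rewrite lee_fin.
Qed.

Lemma Weighted_Area_fin_num D : measurable D -> D `<=` G ->
  Weighted_Area alpha c D \is a fin_num.
Proof.
move=> mD DG; rewrite ge0_fin_numE ?Weighted_Area_ge0 //.
apply: le_lt_trans (Weighted_Area_ubound _ mD DG) _.
by rewrite ltey_eq fin_numM // (leb2_sub_fin_num mD mG DG G_lty).
Qed.

Lemma Weighted_Area_eq0 D : measurable D -> D `<=` G ->
  (Weighted_Area alpha c D == 0)%E = (leb2 D == 0)%E.
Proof.
move=> mD DG; apply/eqP/eqP => [W0 | D0].
  apply/eqP; rewrite eq_le measure_ge0 andbT -(@pmule_rle0 _ m%:E) ?lte_fin //.
  by rewrite -W0 Weighted_Area_lbound.
apply/eqP; rewrite eq_le Weighted_Area_ge0 andbT.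
by rewrite (le_trans (Weighted_Area_ubound _ mD DG)) // D0 mule0.
Qed.

Lemma EC_IoU_eq1 P : measurable P -> (leb2 P < +oo)%E ->
  (EC_IoU alpha P G c == 1) =
  [&& leb2 (P `&` G) != 0, leb2 (G `\` P) == 0 & leb2 (P `\` G) == 0]%E.
Proof.
move=> mP P_lty.
have [mPG mGP mPmG] : [/\ measurable (P `&` G), measurable (G `\` P) & measurable (P `\` G)].
  by split; [exact: measurableI | exact: measurableD | exact: measurableD].
have [finWI finWD] := (Weighted_Area_fin_num _ mPG (@subIsetr _ P G),
  Weighted_Area_fin_num _ mGP (@subDsetl _ G P)).
have [finLI finLD] := (leb2_sub_fin_num mPG mP (@subIsetl _ P G) P_lty,
  leb2_sub_fin_num mPmG mP (@subDsetl _ P G) P_lty).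
have leb2P : leb2 P = (leb2 (P `\` G) + leb2 (P `&` G))%E by exact: measureDI.
rewrite /EC_IoU /Area (Weighted_Area_splitI _ _ mG mP) [G `&` P]setIC leb2P addeA addeK //.
have finWW : (Weighted_Area alpha c (P `&` G) + Weighted_Area alpha c (G `\` P))%E \is a fin_num.
  by rewrite fin_numD finWI finWD.
rewrite (fineD finWW finLD) (fineD finWI finWD).
rewrite div_add3_eq1 ?fine_ge0 ?Weighted_Area_ge0 ?measure_ge0 // !fine_eq0 //.
by rewrite !Weighted_Area_eq0 // ?subIsetr ?subDsetl.
Qed.

End WeightedArea.

End EgoWeight.

Theorem lemma3 (R : realType) (alpha : R)
  (cG : R * R) (aG bG thG : R) (cP : R * R) (aP bP thP : R) :
  0 <= alpha ->
  0 < aG -> 0 < bG -> ~ obox cG aG bG thG (0, 0) ->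
  0 < aP -> 0 < bP ->
  EC_IoU alpha (obox cP aP bP thP) (obox cG aG bG thG) cG = 1 <->
  obox cP aP bP thP = obox cG aG bG thG.
Proof.
move=> alpha0 aG0 bG0 G0 aP0 bP0.
have [m m0 [M wG]] := ec_weight_obox_bounds alpha0 (ltW aG0) (ltW bG0) G0.
have EC1 := EC_IoU_eq1 (measurable_obox _ _ _ _) (leb2_obox_lty aG0 bG0) m0 wG
  _ (measurable_obox _ _ _ _) (leb2_obox_lty aP0 bP0).
split=> [/eqP | PG].
  rewrite EC1 => /and3P[_ /eqP GP /eqP PG].
  by apply/seteqP; split; exact: obox_sub_of_null_setD.
have leb2_set0 : leb2 (@set0 (R * R)) = 0%E by exact: measure0.
apply/eqP; rewrite EC1 PG setIid setDv leb2_set0 eqxx andbT.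
by rewrite gt_eqF // leb2_obox_gt0.
Qed.
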